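(* Let $N\ge1$ be an integer and $\beta,\gamma,\xi,\eta,D,R>0$. Define, for $z>0$, $\bar C(z)=\dfrac{\gamma\xi R^2e^{-\frac{R^2}{4zD}-\eta z}}{8z^2D^2}$ and $g(t)=N\int_0^t\bar C(t-\tau)\,d\tau$. Then the equilibrium $(V,X)=(0,0)$ of the linear system $$\dot V=-\beta V-g(t)X,\qquad \dot X=V$$ is globally uniformly asymptotically stable with exponential rate of convergence.
   Context: This planar system is the linearization, written in centre-of-mass variables for each particle and each coordinate, of a hybrid model of $N$ particles in $\mathbb{R}^2$ with Cucker–Smale alignment (strength $\beta$) and chemotaxis towards a signal diffusing with coefficient $D$, degrading at rate $\eta$, produced at rate $\xi$ on discs of radius $R$, with chemotactic sensitivity $\gamma$. *)

From Stdlib Require Import Reals.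
From Coquelicot Require Import Coquelicot.
Open Scope R_scope.

(* Cbar(z) = gamma xi R^2 exp(-R^2/(4 z D) - eta z) / (8 z^2 D^2) for z > 0;
   extended by 0 for z <= 0 (its limit as z -> 0+), only relevant at the
   endpoint tau = t of the integral defining g. *)
Definition Cbar (gamma xi eta D Rr : R) (z : R) : R :=
  if Rlt_dec 0 z then
    gamma * xi * Rr ^ 2 * exp (- (Rr ^ 2) / (4 * z * D) - eta * z)
      / (8 * z ^ 2 * D ^ 2)
  else 0.

Definition gcoef (N : nat) (gamma xi eta D Rr : R) (t : R) : R :=
  INR N * RInt (fun tau => Cbar gamma xi eta D Rr (t - tau)) 0 t.

Definition is_solution (beta : R) (g : R -> R) (t0 : R) (V X : R -> R) : Prop :=
  filterlim V (at_right t0) (locally (V t0)) /\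
  filterlim X (at_right t0) (locally (X t0)) /\
  forall t, t0 < t ->
    is_derive V t (- beta * V t - g t * X t) /\ is_derive X t (V t).

Definition state_norm (V X : R -> R) (t : R) : R := sqrt (V t ^ 2 + X t ^ 2).

Definition GUES_exp (beta : R) (g : R -> R) : Prop :=
  exists K lam : R, 0 < K /\ 0 < lam /\
    forall (t0 : R) (V X : R -> R), 0 <= t0 -> is_solution beta g t0 V X ->
      forall t, t0 <= t ->
        state_norm V X t <= K * exp (- lam * (t - t0)) * state_norm V X t0.

(* Since g' = N Cbar >= 0 decays exponentially while g is nondecreasing,
   bounded and positive after time 1, eventually g' <= beta g / 2 - delta. Along solutions the
   quadratic form W = V^2 + (g + beta^2/4) X^2 + (beta/2) X V, which is uniformly equivalent to
   V^2 + X^2, has W' = -(3 beta/2) V^2 + (g' - beta g/2) X^2: so W' <= a W at all times and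
   W' <= -b W after a fixed time T. Comparison with exponentials on [t0, T] and [T, t] gives
   W(t) <= K W(t0) e^{-b (t - t0)} with K independent of t0. *)

From Stdlib Require Import Reals Factorial Lra Lia Psatz.
From Coquelicot Require Import Coquelicot.
Open Scope R_scope.

Lemma pow_div_fact_le_exp (u : R) (n : nat) : 0 <= u -> u ^ n / INR (fact n) <= exp u.
Proof.
intro hu. eapply Rle_trans; [|exact (exp_ge_taylor u n hu)].
assert (hterm : forall k, 0 <= u ^ k / INR (fact k)).
{ intro k. apply Rdiv_le_0_compat; [now apply pow_le | apply INR_fact_lt_0]. }
destruct n as [|n]; [simpl; lra|].
rewrite tech5. pose proof (cond_pos_sum _ n hterm). lra.
Qed.

Lemma inv_exp_le_fact_div_pow (u : R) (n : nat) : 0 < u -> / exp u <= INR (fact n) / u ^ n.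
Proof.
intro hu. pose proof (INR_fact_lt_0 n). pose proof (pow_lt u n hu).
rewrite <- (Rinv_div (u ^ n)). apply Rinv_le_contravar.
- now apply Rdiv_lt_0_compat.
- apply pow_div_fact_le_exp; lra.
Qed.

Lemma exp_le_compat (x y : R) : x <= y -> exp x <= exp y.
Proof. intros [hxy|hxy]; [left; now apply exp_increasing | rewrite hxy; apply Rle_refl]. Qed.

Lemma continuous_at_right (f : R -> R) (x : R) :
  continuous f x -> filterlim f (at_right x) (locally (f x)).
Proof.
intro hf. eapply filterlim_filter_le_1; [|exact hf].
intros P [d hd]. exists d. intros y hy _. now apply hd.
Qed.

Lemma is_derive_continuous (f : R -> R) (x l : R) : is_derive f x l -> continuous f x.
Proof. intro hf. apply (ex_derive_continuous (K := R_AbsRing) (V := R_NormedModule)). now exists l. Qed.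

Lemma filterlim_Rplus {T} {F : (T -> Prop) -> Prop} {FF : Filter F} (f h : T -> R) (a b : R) :
  filterlim f F (locally a) -> filterlim h F (locally b) ->
  filterlim (fun t => f t + h t) F (locally (a + b)).
Proof.
intros hf hh. apply (filterlim_comp_2 f h Rplus hf hh).
exact (filterlim_plus (K := R_AbsRing) (V := R_NormedModule) a b).
Qed.

Lemma filterlim_Rmult {T} {F : (T -> Prop) -> Prop} {FF : Filter F} (f h : T -> R) (a b : R) :
  filterlim f F (locally a) -> filterlim h F (locally b) ->
  filterlim (fun t => f t * h t) F (locally (a * b)).
Proof.
intros hf hh. apply (filterlim_comp_2 f h Rmult hf hh).
exact (filterlim_mult (K := R_AbsRing) a b).
Qed.

Lemma derive_nonpos_right_le (f df : R -> R) (a b : R) : a <= b ->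
  (forall x, a < x -> is_derive f x (df x)) -> (forall x, a < x -> df x <= 0) ->
  filterlim f (at_right a) (locally (f a)) -> f b <= f a.
Proof.
intros hab hder hneg hcont.
assert (hmvt : forall s, a < s <= b -> f b <= f s).
{ intros s hs. destruct (MVT_gen f s b df) as [c [hc hfc]].
  - intros x hx. rewrite Rmin_left, Rmax_right in hx by lra. apply hder; lra.
  - intros x hx. rewrite Rmin_left, Rmax_right in hx by lra.
    apply continuity_pt_filterlim, (is_derive_continuous _ _ (df x)), hder; lra.
  - rewrite Rmin_left, Rmax_right in hc by lra. pose proof (hneg c ltac:(lra)). nra. }
destruct (Rle_lt_or_eq_dec _ _ hab) as [hlt|heq]; [|subst; lra].
apply (filterlim_le (F := at_right a) (fun _ => f b) f (f b) (f a)).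
- exists (mkposreal _ (proj2 (Rlt_0_minus a b) hlt)). intros y hy hay.
  apply hmvt. split; [exact hay|]. change (Rabs (y - a) < b - a) in hy. apply Rabs_def2 in hy. lra.
- apply filterlim_const.
- exact hcont.
Qed.

Lemma derive_nonpos_le (f df : R -> R) (a b : R) : a <= b ->
  (forall x, a <= x -> is_derive f x (df x)) -> (forall x, a < x -> df x <= 0) -> f b <= f a.
Proof.
intros hab hder hneg. apply (derive_nonpos_right_le f df); auto.
- intros x hx. apply hder; lra.
- apply continuous_at_right, (is_derive_continuous _ _ (df a)), hder; lra.
Qed.

Lemma exp_bound_of_derive_le (f df : R -> R) (s c : R) :
  (forall x, s < x -> is_derive f x (df x)) -> (forall x, s < x -> df x <= c * f x) ->
  filterlim f (at_right s) (locally (f s)) ->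
  forall t, s <= t -> f t <= f s * exp (c * (t - s)).
Proof.
intros hder hle hcont t hst.
set (damped := fun x => f x * exp (- c * (x - s))).
assert (hdamped : damped t <= damped s).
{ apply (derive_nonpos_right_le damped (fun x => (df x - c * f x) * exp (- c * (x - s)))); auto.
  - intros x hx. unfold damped. auto_derive; [exists (df x); now apply hder|].
    replace (Derive (fun y => f y) x) with (df x)
      by (symmetry; apply is_derive_unique; now apply hder).
    change (x + - s) with (x - s). ring.
  - intros x hx. pose proof (hle x hx). pose proof (exp_pos (- c * (x - s))). nra.
  - apply filterlim_Rmult; [exact hcont|]. apply (continuous_at_right (fun x => exp (- c * (x - s)))).
    apply (is_derive_continuous _ _ (- c * exp (- c * (s - s)))).
    auto_derive; [exact I|]. change (s + - s) with (s - s). ring. }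
unfold damped in hdamped. rewrite Rminus_diag, Rmult_0_r, exp_0, Rmult_1_r in hdamped.
replace (f t) with (f t * exp (- c * (t - s)) * exp (c * (t - s))).
- pose proof (exp_pos (c * (t - s))). nra.
- rewrite Rmult_assoc, <- exp_plus. replace (- c * (t - s) + c * (t - s)) with 0 by ring.
  rewrite exp_0. ring.
Qed.

Lemma exp_bound_of_derive_le_eventually (f df : R -> R) (t0 T a b : R) :
  0 <= t0 -> 0 <= a -> 0 <= b -> 0 <= f t0 ->
  (forall x, t0 < x -> is_derive f x (df x)) ->
  filterlim f (at_right t0) (locally (f t0)) ->
  (forall x, t0 < x -> df x <= a * f x) ->
  (forall x, t0 < x -> T <= x -> df x <= - b * f x) ->
  forall t, t0 <= t -> f t <= f t0 * exp ((a + b) * Rmax 0 T) * exp (- b * (t - t0)).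
Proof.
intros ht0 ha hb hf0 hder hcont hgrow hdecay t ht.
pose proof (Rmax_l 0 T). pose proof (Rmax_r 0 T).
rewrite Rmult_assoc, <- exp_plus.
assert (hexp : forall u, u <= (a + b) * Rmax 0 T + - b * (t - t0) ->
          f t0 * exp u <= f t0 * exp ((a + b) * Rmax 0 T + - b * (t - t0))).
{ intros u hu. apply Rmult_le_compat_l; [exact hf0|]. now apply exp_le_compat. }
destruct (Rle_dec t T) as [htT|htT]; [|destruct (Rle_dec T t0) as [hTt0|hTt0]].
- eapply Rle_trans; [apply (exp_bound_of_derive_le f df t0 a); auto|]. apply hexp. nra.
- eapply Rle_trans.
  + apply (exp_bound_of_derive_le f df t0 (- b)); auto. intros x hx. apply hdecay; lra.
  + apply hexp. nra.
- assert (hT : f T <= f t0 * exp (a * (T - t0))).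
  { apply (exp_bound_of_derive_le f df t0 a); auto; lra. }
  eapply Rle_trans.
  { apply (exp_bound_of_derive_le f df T (- b)); [intros; apply hder; lra | | | lra].
    - intros x hx. apply hdecay; lra.
    - apply continuous_at_right, (is_derive_continuous _ _ (df T)), hder. lra. }
  eapply Rle_trans; [apply Rmult_le_compat_r; [left; apply exp_pos | exact hT]|].
  rewrite Rmult_assoc, <- exp_plus. apply hexp. nra.
Qed.

Lemma GUES_exp_of_sq_bound (beta : R) (g : R -> R) (K lam : R) : 0 < K -> 0 < lam ->
  (forall t0 V X, 0 <= t0 -> is_solution beta g t0 V X -> forall t, t0 <= t ->
     V t ^ 2 + X t ^ 2 <= K * exp (- lam * (t - t0)) * (V t0 ^ 2 + X t0 ^ 2)) ->
  GUES_exp beta g.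
Proof.
intros hK hlam hbound. exists (sqrt K), (lam / 2).
split; [now apply sqrt_lt_R0|]. split; [lra|].
intros t0 V X ht0 hsol t ht. unfold state_norm.
assert (hexp : exp (- lam * (t - t0)) = exp (- (lam / 2) * (t - t0)) ^ 2).
{ rewrite <- Rsqr_pow2. unfold Rsqr. rewrite <- exp_plus. f_equal. field. }
pose proof (exp_pos (- (lam / 2) * (t - t0))).
pose proof (pow2_ge_0 (V t0)). pose proof (pow2_ge_0 (X t0)).
eapply Rle_trans; [apply sqrt_le_1_alt, (hbound t0 V X ht0 hsol t ht)|].
rewrite hexp, !sqrt_mult_alt, sqrt_pow2; try lra.
apply Rmult_le_pos; [lra | apply pow2_ge_0].
Qed.

Section LinearSystem.

Variables (beta G L T delta : R) (g dg : R -> R).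
Hypothesis beta_pos : 0 < beta.
Hypothesis g_derive : forall t, 0 <= t -> is_derive g t (dg t).
Hypothesis g_nonneg : forall t, 0 <= t -> 0 <= g t.
Hypothesis g_le : forall t, 0 <= t -> g t <= G.
Hypothesis dg_le : forall t, 0 <= t -> dg t <= L.
Hypothesis delta_pos : 0 < delta.
Hypothesis dg_sub_g_le : forall t, T <= t -> dg t - beta / 2 * g t <= - delta.

Definition lyap (c v x : R) : R := v ^ 2 + (c + beta ^ 2 / 4) * x ^ 2 + beta / 2 * x * v.

Let m := Rmin (1 / 2) (beta ^ 2 / 8).
Let M := 1 + G + beta / 4 + beta ^ 2 / 4.

Lemma lyap_lower (c v x : R) : 0 <= c -> m * (v ^ 2 + x ^ 2) <= lyap c v x.
Proof.
intro hc. pose proof (Rmin_l (1 / 2) (beta ^ 2 / 8)). pose proof (Rmin_r (1 / 2) (beta ^ 2 / 8)).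
pose proof (pow2_ge_0 v). pose proof (pow2_ge_0 x). pose proof (pow2_ge_0 (v + beta / 2 * x)).
unfold lyap, m. nra.
Qed.

Lemma G_nonneg : 0 <= G.
Proof. apply (Rle_trans _ (g 0)); [apply g_nonneg | apply g_le]; lra. Qed.

Lemma lyap_upper (c v x : R) : c <= G -> lyap c v x <= M * (v ^ 2 + x ^ 2).
Proof.
intro hc. pose proof G_nonneg. pose proof (pow2_ge_0 v). pose proof (pow2_ge_0 x).
assert ((G - c) * x ^ 2 >= 0) by nra.
assert (beta * (v - x) ^ 2 >= 0) by (pose proof (pow2_ge_0 (v - x)); nra).
assert (0 <= (G + beta ^ 2 / 4) * v ^ 2) by (pose proof (pow2_ge_0 beta); nra).
unfold lyap, M. nra.
Qed.

Let m_pos : 0 < m.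
Proof. apply Rmin_pos; [lra|]. apply Rdiv_lt_0_compat; [now apply pow_lt | lra]. Qed.

Let M_pos : 0 < M.
Proof. pose proof G_nonneg. pose proof (pow2_ge_0 beta). unfold M. lra. Qed.

Let a := Rabs L / m.
Let b := Rmin (3 * beta / 2) delta / M.
Let K := M / m * exp ((a + b) * Rmax 0 T).

Let b_pos : 0 < b.
Proof. apply Rdiv_lt_0_compat; [apply Rmin_pos; lra | exact M_pos]. Qed.

Section Solution.

Variables (t0 : R) (V X : R -> R).
Hypothesis t0_nonneg : 0 <= t0.
Hypothesis solution : is_solution beta g t0 V X.

Let W (t : R) : R := lyap (g t) (V t) (X t).
Let dW (t : R) : R := - (3 * beta / 2) * V t ^ 2 + (dg t - beta / 2 * g t) * X t ^ 2.

Lemma lyap_derive (t : R) : t0 < t -> is_derive W t (dW t).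
Proof.
intro ht. destruct solution as [_ [_ hder]]. destruct (hder t ht) as [hV hX].
pose proof (g_derive t ltac:(lra)) as hg.
unfold W, dW, lyap. auto_derive.
- repeat split; eexists; eauto.
- replace (Derive (fun y => V y) t) with (- beta * V t - g t * X t)
    by (symmetry; now apply is_derive_unique).
  replace (Derive (fun y => X y) t) with (V t) by (symmetry; now apply is_derive_unique).
  replace (Derive (fun y => g y) t) with (dg t) by (symmetry; now apply is_derive_unique).
  field.
Qed.

Lemma lyap_right_continuous : filterlim W (at_right t0) (locally (W t0)).
Proof.
destruct solution as [hV [hX _]].
assert (hg : filterlim g (at_right t0) (locally (g t0))).
{ apply continuous_at_right, (is_derive_continuous _ _ (dg t0)), g_derive, t0_nonneg. }
assert (hsq : forall f : R -> R, filterlim f (at_right t0) (locally (f t0)) ->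
          filterlim (fun t => f t ^ 2) (at_right t0) (locally (f t0 ^ 2))).
{ intros f hf. change (fun t => f t ^ 2) with (fun t => f t * (f t * 1)).
  replace (f t0 ^ 2) with (f t0 * (f t0 * 1)) by ring.
  apply filterlim_Rmult; [exact hf|]. apply filterlim_Rmult; [exact hf | apply filterlim_const]. }
unfold W, lyap. repeat apply filterlim_Rplus.
- now apply hsq.
- apply filterlim_Rmult; [apply filterlim_Rplus; [exact hg | apply filterlim_const] | now apply hsq].
- repeat apply filterlim_Rmult; first [apply filterlim_const | assumption].
Qed.

Lemma lyap_growth (t : R) : t0 < t -> dW t <= a * W t.
Proof.
intro ht. pose proof (dg_le t ltac:(lra)). pose proof (g_nonneg t ltac:(lra)).
pose proof (lyap_lower (g t) (V t) (X t) ltac:(auto)). pose proof m_pos.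
pose proof (Rle_abs L). pose proof (Rabs_pos L).
pose proof (pow2_ge_0 (V t)). pose proof (pow2_ge_0 (X t)).
assert (hcoef : dg t - beta / 2 * g t <= Rabs L) by nra.
assert (hdW : dW t <= Rabs L * (V t ^ 2 + X t ^ 2)).
{ unfold dW. pose proof (Rmult_le_compat_r (X t ^ 2) _ _ ltac:(assumption) hcoef). nra. }
apply (Rle_trans _ _ _ hdW).
unfold a. replace (Rabs L / m * W t) with (Rabs L * (W t / m)) by (field; lra).
apply Rmult_le_compat_l; [exact (Rabs_pos L)|].
apply (Rmult_le_reg_l m); [exact m_pos|]. replace (m * (W t / m)) with (W t) by (field; lra).
fold (W t) in *. lra.
Qed.

Lemma lyap_decay (t : R) : t0 < t -> T <= t -> dW t <= - b * W t.
Proof.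
intros ht hT. pose proof (dg_sub_g_le t hT). pose proof (g_le t ltac:(lra)).
pose proof (lyap_upper (g t) (V t) (X t) ltac:(auto)). pose proof M_pos.
pose proof (Rmin_l (3 * beta / 2) delta). pose proof (Rmin_r (3 * beta / 2) delta).
assert (hc : 0 < Rmin (3 * beta / 2) delta) by (apply Rmin_pos; lra).
pose proof (pow2_ge_0 (V t)). pose proof (pow2_ge_0 (X t)).
assert (hdW : dW t <= - Rmin (3 * beta / 2) delta * (V t ^ 2 + X t ^ 2)) by (unfold dW; nra).
apply (Rle_trans _ _ _ hdW).
unfold b. replace (- (Rmin (3 * beta / 2) delta / M) * W t)
  with (- Rmin (3 * beta / 2) delta * (W t / M)) by (field; lra).
apply Rmult_le_compat_neg_l; [lra|].
apply (Rmult_le_reg_l M); [exact M_pos|]. replace (M * (W t / M)) with (W t) by (field; lra).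
fold (W t) in *. lra.
Qed.

Lemma solution_sq_bound (t : R) : t0 <= t ->
  V t ^ 2 + X t ^ 2 <= K * exp (- b * (t - t0)) * (V t0 ^ 2 + X t0 ^ 2).
Proof.
intro ht. pose proof m_pos. pose proof M_pos. pose proof b_pos.
pose proof (exp_pos ((a + b) * Rmax 0 T)). pose proof (exp_pos (- b * (t - t0))).
assert (ha : 0 <= a) by (apply Rdiv_le_0_compat; [apply Rabs_pos | lra]).
assert (hW0 : m * (V t0 ^ 2 + X t0 ^ 2) <= W t0) by (apply lyap_lower, g_nonneg; lra).
assert (hW0' : W t0 <= M * (V t0 ^ 2 + X t0 ^ 2)) by (apply lyap_upper, g_le; lra).
assert (hWt : m * (V t ^ 2 + X t ^ 2) <= W t) by (apply lyap_lower, g_nonneg; lra).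
assert (hS0 : 0 <= V t0 ^ 2 + X t0 ^ 2)
  by (pose proof (pow2_ge_0 (V t0)); pose proof (pow2_ge_0 (X t0)); lra).
assert (hdecay : W t <= W t0 * exp ((a + b) * Rmax 0 T) * exp (- b * (t - t0))).
{ apply (exp_bound_of_derive_le_eventually W dW t0 T a b t0_nonneg ha); [lra | nra | | | | | exact ht].
  - exact lyap_derive.
  - exact lyap_right_continuous.
  - exact lyap_growth.
  - exact lyap_decay. }
apply (Rmult_le_reg_l m); [lra|].
replace (m * (K * exp (- b * (t - t0)) * (V t0 ^ 2 + X t0 ^ 2)))
  with (M * (V t0 ^ 2 + X t0 ^ 2) * exp ((a + b) * Rmax 0 T) * exp (- b * (t - t0)))
  by (unfold K; field; lra).
assert (W t0 * exp ((a + b) * Rmax 0 T) * exp (- b * (t - t0))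
        <= M * (V t0 ^ 2 + X t0 ^ 2) * exp ((a + b) * Rmax 0 T) * exp (- b * (t - t0))).
{ apply Rmult_le_compat_r; [lra|]. apply Rmult_le_compat_r; lra. }
lra.
Qed.

End Solution.

Theorem linear_system_GUES_exp : GUES_exp beta g.
Proof.
apply (GUES_exp_of_sq_bound beta g K b).
- apply Rmult_lt_0_compat; [apply Rdiv_lt_0_compat; [exact M_pos | exact m_pos] | apply exp_pos].
- exact b_pos.
- intros t0 V X ht0 hsol. now apply solution_sq_bound.
Qed.

End LinearSystem.

Section Kernel.

Variables gamma xi eta D Rr : R.
Hypotheses (gamma_pos : 0 < gamma) (xi_pos : 0 < xi) (eta_pos : 0 < eta) (D_pos : 0 < D)
  (Rr_pos : 0 < Rr).

Let Cb := Cbar gamma xi eta D Rr.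
Let k := gamma * xi * Rr ^ 2 / (8 * D ^ 2).
Let a := Rr ^ 2 / (4 * D).

Let k_pos : 0 < k.
Proof. unfold k. apply Rdiv_lt_0_compat; [|nra]. apply Rmult_lt_0_compat; nra. Qed.

Let a_pos : 0 < a.
Proof. unfold a. apply Rdiv_lt_0_compat; nra. Qed.

Lemma Cbar_eq (z : R) : 0 < z -> Cb z = k * exp (- eta * z) / z ^ 2 * / exp (a / z).
Proof.
intro hz. unfold Cb, Cbar. destruct (Rlt_dec 0 z) as [_|]; [|lra].
replace (- Rr ^ 2 / (4 * z * D) - eta * z) with (- eta * z + - (a / z)) by (unfold a; field; lra).
rewrite exp_plus, exp_Ropp. unfold k. field. split; [apply Rgt_not_eq, exp_pos | lra].
Qed.

Lemma Cbar_nonpos (z : R) : z <= 0 -> Cb z = 0.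
Proof. intro hz. unfold Cb, Cbar. destruct (Rlt_dec 0 z); lra. Qed.

Lemma Cbar_pos (z : R) : 0 < z -> 0 < Cb z.
Proof.
intro hz. rewrite Cbar_eq by exact hz. pose proof k_pos. pose proof (exp_pos (- eta * z)).
apply Rmult_lt_0_compat; [apply Rdiv_lt_0_compat; [nra | now apply pow_lt] |].
apply Rinv_0_lt_compat, exp_pos.
Qed.

Lemma Cbar_nonneg (z : R) : 0 <= Cb z.
Proof. destruct (Rlt_dec 0 z). - left; now apply Cbar_pos. - rewrite Cbar_nonpos; lra. Qed.

(* Both bounds come from [e^{a/z} >= (a/z)^n / n!], with [n = 2] and [n = 3]. *)
Lemma Cbar_le_exp : exists A, 0 < A /\ forall z, Cb z <= A * exp (- eta * z).
Proof.
pose proof k_pos. pose proof a_pos. exists (2 * k / a ^ 2).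
split; [apply Rdiv_lt_0_compat; [lra | now apply pow_lt]|].
intro z. pose proof (exp_pos (- eta * z)). destruct (Rlt_dec 0 z) as [hz|hz].
- rewrite Cbar_eq by exact hz.
  pose proof (inv_exp_le_fact_div_pow (a / z) 2 ltac:(apply Rdiv_lt_0_compat; lra)) as hinv.
  replace (INR (fact 2) / (a / z) ^ 2) with (2 * z ^ 2 / a ^ 2) in hinv by (simpl; field; lra).
  replace (2 * k / a ^ 2 * exp (- eta * z))
    with (k * exp (- eta * z) / z ^ 2 * (2 * z ^ 2 / a ^ 2)) by (field; lra).
  apply Rmult_le_compat_l; [apply Rdiv_le_0_compat; [nra | now apply pow_lt] | exact hinv].
- rewrite Cbar_nonpos by lra.
  apply Rmult_le_pos; [apply Rdiv_le_0_compat; [lra | now apply pow_lt] | lra].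
Qed.

Lemma Cbar_le_lin : exists B, forall z, 0 < z -> Cb z <= B * z.
Proof.
pose proof k_pos. pose proof a_pos. exists (6 * k / a ^ 3). intros z hz.
rewrite Cbar_eq by exact hz.
pose proof (inv_exp_le_fact_div_pow (a / z) 3 ltac:(apply Rdiv_lt_0_compat; lra)) as hinv.
replace (INR (fact 3) / (a / z) ^ 3) with (6 * z ^ 3 / a ^ 3) in hinv by (simpl; field; lra).
assert (hexp : exp (- eta * z) <= 1) by (rewrite <- exp_0; apply exp_le_compat; nra).
pose proof (exp_pos (- eta * z)). pose proof (Rinv_0_lt_compat _ (exp_pos (a / z))).
replace (6 * k / a ^ 3 * z) with (k * 1 / z ^ 2 * (6 * z ^ 3 / a ^ 3)) by (field; lra).
apply Rmult_le_compat; [| lra | | exact hinv].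
- apply Rdiv_le_0_compat; [nra | now apply pow_lt].
- apply Rmult_le_compat_r; [left; now apply Rinv_0_lt_compat, pow_lt|]. nra.
Qed.

Lemma Cbar_continuous (z : R) : continuous Cb z.
Proof.
destruct (Rtotal_order z 0) as [hz|[hz|hz]].
- apply (continuous_ext_loc _ (fun _ => 0)); [|apply continuous_const].
  apply (filter_imp (fun y => y < 0)); [intros y hy; symmetry; apply Cbar_nonpos; lra|].
  now apply open_lt.
- subst z. destruct Cbar_le_lin as [B hB].
  assert (hlin : continuous (fun y => B * Rabs y) 0).
  { apply (continuous_mult (K := R_AbsRing) (fun _ => B) Rabs).
    - apply continuous_const.
    - apply continuous_Rabs. }
  unfold continuous in *. rewrite Rabs_R0, Rmult_0_r in hlin. rewrite Cbar_nonpos by lra.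
  apply (filterlim_le_le (fun _ => 0) Cb (fun y => B * Rabs y) 0);
    [| apply filterlim_const | exact hlin].
  apply filter_forall. intro y. split; [apply Cbar_nonneg|].
  destruct (Rlt_dec 0 y) as [hy|hy].
  + rewrite Rabs_pos_eq by lra. now apply hB.
  + rewrite Cbar_nonpos by lra. pose proof (hB 1 Rlt_0_1). pose proof (Cbar_nonneg 1).
    pose proof (Rabs_pos y). nra.
- apply (continuous_ext_loc _
    (fun y => gamma * xi * Rr ^ 2 * exp (- (Rr ^ 2) / (4 * y * D) - eta * y) / (8 * y ^ 2 * D ^ 2))).
  + apply (filter_imp (fun y => 0 < y)); [|now apply open_gt].
    intros y hy. unfold Cb, Cbar. now destruct (Rlt_dec 0 y).
  + apply (ex_derive_continuous (K := R_AbsRing) (V := R_NormedModule)). auto_derive.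
    assert (0 < z * D) by nra. assert (0 < z * z * (D * D)) by (apply Rmult_lt_0_compat; nra).
    repeat split; nra.
Qed.

Lemma Cbar_bounded : exists A, forall z, Cb z <= A.
Proof.
destruct Cbar_le_exp as [A [hA hCA]]. exists A. intro z.
destruct (Rle_dec z 0) as [hz|hz]; [rewrite Cbar_nonpos; lra|].
apply (Rle_trans _ _ _ (hCA z)). rewrite <- (Rmult_1_r A) at 2.
apply Rmult_le_compat_l; [lra|]. rewrite <- exp_0. apply exp_le_compat. nra.
Qed.

Lemma Cbar_eventually_le (eps : R) : 0 < eps -> exists T, forall t, T <= t -> Cb t <= eps.
Proof.
intro heps. destruct Cbar_le_exp as [A [hA hCA]].
exists (Rabs (ln (eps / A)) / eta). intros t ht.
apply (Rle_trans _ _ _ (hCA t)).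
assert (heps' : A * exp (ln (eps / A)) = eps)
  by (rewrite exp_ln by (apply Rdiv_lt_0_compat; lra); field; lra).
rewrite <- heps'.
apply Rmult_le_compat_l; [lra|]. apply exp_le_compat.
pose proof (Rle_abs (- ln (eps / A))). rewrite Rabs_Ropp in *.
apply (Rmult_le_compat_l eta) in ht; [|lra].
replace (eta * (Rabs (ln (eps / A)) / eta)) with (Rabs (ln (eps / A))) in ht by (field; lra).
lra.
Qed.

Section Coefficient.

Variable N : nat.
Hypothesis N_pos : (1 <= N)%nat.

Let g := gcoef N gamma xi eta D Rr.

Lemma ex_RInt_Cbar (u v : R) : ex_RInt Cb u v.
Proof. apply (ex_RInt_continuous (V := R_CompleteNormedModule)). intros; now apply Cbar_continuous. Qed.

Lemma gcoef_eq (t : R) : g t = INR N * RInt Cb 0 t.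
Proof.
unfold g, gcoef. f_equal.
rewrite (RInt_ext _ (fun tau => opp (scal (-1) (Cb (-1 * tau + t))))).
2:{ intros x _. unfold opp, scal; simpl; unfold mult; simpl.
     replace (-1 * x + t) with (t - x) by ring. unfold Cb. ring. }
rewrite (RInt_opp (V := R_CompleteNormedModule))
  by (apply (ex_RInt_comp_lin (V := R_NormedModule)), ex_RInt_Cbar).
rewrite (RInt_comp_lin (V := R_CompleteNormedModule)) by apply ex_RInt_Cbar.
replace (-1 * 0 + t) with t by ring. replace (-1 * t + t) with 0 by ring.
rewrite <- (opp_RInt_swap (V := R_CompleteNormedModule)) by apply ex_RInt_Cbar. apply opp_opp.
Qed.

Lemma gcoef_derive (t : R) : is_derive g t (INR N * Cb t).
Proof.
apply (is_derive_ext (fun t => INR N * RInt Cb 0 t)); [intro; now rewrite gcoef_eq|].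
apply is_derive_scal, (is_derive_RInt Cb (RInt Cb 0) 0 t); [|now apply Cbar_continuous].
apply filter_forall. intro u. apply (RInt_correct (V := R_CompleteNormedModule)), ex_RInt_Cbar.
Qed.

Lemma gcoef_0 : g 0 = 0.
Proof. rewrite gcoef_eq, RInt_point. unfold zero; simpl. ring. Qed.

Let INR_N_pos : 0 < INR N.
Proof. apply lt_0_INR. lia. Qed.

Lemma gcoef_le_compat (s t : R) : s <= t -> g s <= g t.
Proof.
intro hst. apply Ropp_le_cancel.
apply (derive_nonpos_le (fun x => - g x) (fun x => - (INR N * Cb x)) s t hst).
- intros x _. apply @is_derive_opp, gcoef_derive.
- intros x _. pose proof INR_N_pos. pose proof (Cbar_nonneg x). nra.
Qed.

Lemma gcoef_nonneg (t : R) : 0 <= t -> 0 <= g t.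
Proof. intro ht. rewrite <- gcoef_0. now apply gcoef_le_compat. Qed.

Lemma gcoef_bounded : exists G, forall t, 0 <= t -> g t <= G.
Proof.
destruct Cbar_le_exp as [A [hA hCA]].
pose proof INR_N_pos. set (G := INR N * A / eta). exists G. intros t ht.
set (h := fun x => g x + G * exp (- eta * x)).
assert (hh : h t <= h 0).
{ apply (derive_nonpos_le h (fun x => INR N * Cb x + G * (- eta * exp (- eta * x))) 0 t ht).
  - intros x _. unfold h. apply @is_derive_plus; [apply gcoef_derive|].
    apply is_derive_scal. auto_derive; [exact I | now rewrite Rmult_1_r].
  - intros x _. assert (INR N * Cb x <= INR N * (A * exp (- eta * x)))
      by (apply Rmult_le_compat_l; [lra | apply hCA]).
    unfold G. replace (INR N * A / eta * (- eta * exp (- eta * x)))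
      with (- (INR N * (A * exp (- eta * x)))) by (field; lra).
    lra. }
unfold h in hh. rewrite gcoef_0, Rmult_0_r, exp_0 in hh.
pose proof (exp_pos (- eta * t)). assert (0 < G) by (apply Rdiv_lt_0_compat; nra). nra.
Qed.

Lemma gcoef_1_pos : 0 < g 1.
Proof.
apply (Rle_lt_trans _ (g (1 / 2))); [apply gcoef_nonneg; lra|].
apply (incr_function g 0 p_infty (fun x => INR N * Cb x)); simpl; auto; try lra.
- intros x _ _. apply gcoef_derive.
- intros x hx _. pose proof INR_N_pos. pose proof (Cbar_pos x hx). nra.
Qed.

Lemma gcoef_eventually (beta : R) : 0 < beta ->
  exists T, forall t, T <= t -> INR N * Cb t - beta / 2 * g t <= - (beta * g 1 / 4).
Proof.
intro hbeta. pose proof INR_N_pos. pose proof gcoef_1_pos.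
destruct (Cbar_eventually_le (beta * g 1 / (4 * INR N))) as [T hT].
{ apply Rdiv_lt_0_compat; nra. }
exists (Rmax 1 T). intros t ht.
pose proof (hT t (Rle_trans _ _ _ (Rmax_r 1 T) ht)) as hC.
pose proof (gcoef_le_compat 1 t (Rle_trans _ _ _ (Rmax_l 1 T) ht)) as hg.
apply (Rmult_le_compat_l (INR N)) in hC; [|lra].
replace (INR N * (beta * g 1 / (4 * INR N))) with (beta * g 1 / 4) in hC by (field; lra).
nra.
Qed.

End Coefficient.

End Kernel.

Theorem theorem5p2 (N : nat) (beta gamma xi eta D Rr : R) :
  (1 <= N)%nat -> 0 < beta -> 0 < gamma -> 0 < xi -> 0 < eta -> 0 < D -> 0 < Rr ->
  GUES_exp beta (gcoef N gamma xi eta D Rr).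
Proof.
intros hN hbeta hgamma hxi heta hD hRr.
destruct (gcoef_bounded gamma xi eta D Rr hgamma hxi heta hD hRr N hN) as [G hG].
destruct (Cbar_bounded gamma xi eta D Rr hgamma hxi heta hD hRr) as [A hA].
destruct (gcoef_eventually gamma xi eta D Rr hgamma hxi heta hD hRr N hN beta hbeta) as [T hT].
apply (linear_system_GUES_exp beta G (INR N * A) T (beta * gcoef N gamma xi eta D Rr 1 / 4)
         _ (fun t => INR N * Cbar gamma xi eta D Rr t)); auto.
- intros t _. now apply gcoef_derive.
- intros t ht. now apply gcoef_nonneg.
- intros t _. apply Rmult_le_compat_l; [apply pos_INR | apply hA].
- pose proof (gcoef_1_pos gamma xi eta D Rr hgamma hxi heta hD hRr N hN). nra.
Qed.
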